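(* There is an absolute constant $C>0$ and an algorithm with the following property. Let $S$ be a set of arms with reward distributions supported on $[0,1]$ and means $\theta_1\ge\dots\ge\theta_{|S|}$ (indexing unknown to the algorithm), where $|S|/10$ and $K/2$ are integers, $\frac{|S|}{3}\le K\le|S|-1$, and let $\gamma,\delta\in(0,1/2]$, $\phi\in(0,1]$. If $\theta_{K/2}-\theta_K\ge\phi$, then the algorithm makes at most $C\frac{|S|}{\phi^2}(\log\frac1\gamma+\log\frac1\delta)$ pulls and with probability at least $1-\delta$ outputs a set $T\subseteq S$ with $|T|=|S|/10$ such that at most $\gamma K$ arms of $T$ belong to $\{K+1,\dots,|S|\}$ (the bottom $|S|-K$ arms of $S$).
   Context: Stochastic bandit model: each pull yields an independent sample from the pulled arm's unknown distribution. *)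

From Stdlib Require Import Reals Lra Lia List Arith ClassicalDescription.
Open Scope R_scope.

Definition bounded01 (f : R -> R) : Prop :=
  exists M, forall x, 0 <= x <= 1 -> Rabs (f x) <= M.

(** A reward distribution supported on [0,1], given by its expectation
    operator on functions bounded on [0,1]: linear, monotone w.r.t. the
    values on [0,1] (this encodes the support), and normalised. *)
Record armdist := {
  Ex : (R -> R) -> R;
  Ex_lin : forall a f g, bounded01 f -> bounded01 g ->
    Ex (fun x => a * f x + g x) = a * Ex f + Ex g;
  Ex_mono : forall f g, bounded01 f -> bounded01 g ->
    (forall x, 0 <= x <= 1 -> f x <= g x) -> Ex f <= Ex g;
  Ex_one : Ex (fun _ => 1) = 1
}.

Definition mean (d : armdist) : R := Ex d (fun x => x).

(** An (adaptive, possibly randomised) bandit algorithm as a decision tree: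
    - [Pull i k]: pull arm i, observe reward x, continue with [k x];
    - [Coin p k]: flip an internal coin showing [true] with probability p;
    - [Out T]: stop and output the list of arms T. *)
Inductive alg : Type :=
| Pull : nat -> (R -> alg) -> alg
| Coin : R -> (bool -> alg) -> alg
| Out : list nat -> alg.

Fixpoint succ_prob (D : nat -> armdist) (P : list nat -> Prop) (t : alg) : R :=
  match t with
  | Out T => if excluded_middle_informative (P T) then 1 else 0
  | Pull i k => Ex (D i) (fun x => succ_prob D P (k x))
  | Coin p k => p * succ_prob D P (k true) + (1 - p) * succ_prob D P (k false)
  end.

Fixpoint pulls_within (n : nat) (t : alg) (B : R) : Prop :=
  match t with
  | Out _ => True
  | Pull i k => (i < n)%nat /\ 1 <= B /\ forall x, pulls_within n (k x) (B - 1)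
  | Coin p k => 0 <= p <= 1 /\ forall b, pulls_within n (k b) B
  end.

(** sigma is a ranking of the arms 0..n-1 (a bijection of {0..n-1}) by
    nonincreasing mean: sigma j is the arm of rank j+1. *)
Definition sorted_ranking (n : nat) (D : nat -> armdist) (sigma : nat -> nat) : Prop :=
  (forall j, (j < n)%nat -> (sigma j < n)%nat) /\
  (forall i j, (i < n)%nat -> (j < n)%nat -> sigma i = sigma j -> i = j) /\
  (forall i j, (i <= j)%nat -> (j < n)%nat -> mean (D (sigma j)) <= mean (D (sigma i))).

(** Number of elements of T that are among the bottom n-K arms
    (ranks K+1..n, i.e. sigma K, ..., sigma (n-1)). *)
Definition bad_count (n K : nat) (sigma : nat -> nat) (T : list nat) : nat :=
  length (filter (fun a => existsb (fun j => Nat.eqb (sigma j) a) (seq K (n - K))) T).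

Definition good_output (n K : nat) (gamma : R) (sigma : nat -> nat) (T : list nat) : Prop :=
  NoDup T /\ (forall a, In a T -> (a < n)%nat) /\ length T = (n / 10)%nat /\
  INR (bad_count n K sigma T) <= gamma * INR K.

(* Pull every arm m ~ (log 1/gamma + log 1/delta) / phi^2 times and keep the
   n/10 arms with the largest empirical means.  By Hoeffding's inequality an
   arm's empirical mean is phi/2-far from its mean with probability at most
   2 (gamma delta)^4, so by Markov's inequality at least gamma K / 5 arms
   deviate with probability at most delta.  Otherwise, a selected bottom arm
   (rank > K) that does not deviate is beaten by every non-deviating arm of
   the top K/2, whose means exceed its own by phi; all of these would be
   selected too, i.e. more than K/2 - K/10 > n/10 arms.  So every selected
   bottom arm deviates, and there are fewer than gamma K of them. *)

From Stdlib Require Import Reals Lra Lia List Arith ClassicalDescription.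
From Stdlib Require Import FunctionalExtensionality ZArith.
Open Scope R_scope.

Lemma Rabs_le_inv a b : Rabs a <= b -> -b <= a <= b.
Proof. unfold Rabs; destruct (Rcase_abs a); lra. Qed.

Lemma exp_le_compat x y : x <= y -> exp x <= exp y.
Proof.
  intros H; destruct (Req_dec x y) as [->|E]; [lra|].
  left; apply exp_increasing; lra.
Qed.

Lemma ln_le_compat x y : 0 < x -> x <= y -> ln x <= ln y.
Proof.
  intros H1 H2; destruct (Req_dec x y) as [->|E]; [lra|].
  left; apply ln_increasing; lra.
Qed.

Lemma exp_mult_INR k x : exp (INR k * x) = exp x ^ k.
Proof.
  induction k as [|k IH]; [simpl; rewrite Rmult_0_l, exp_0; auto|].
  rewrite S_INR, Rmult_plus_distr_r, exp_plus, IH, Rmult_1_l; simpl; ring.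
Qed.

Lemma exp_le_quadratic y : y <= / 2 -> exp y <= 1 + y + 2 * y ^ 2.
Proof.
  intros Hy.
  assert (Hinv : exp y * exp (- y) = 1) by (rewrite <- exp_plus, Rplus_opp_r, exp_0; auto).
  pose proof (exp_ineq1_le (- y)). pose proof (exp_pos y).
  assert (exp y * (1 - y) <= 1) by (rewrite <- Hinv; apply Rmult_le_compat_l; lra).
  assert (1 <= (1 + y + 2 * y ^ 2) * (1 - y)) by nra.
  apply Rmult_le_reg_r with (1 - y); lra.
Qed.

Lemma bounded01_const c : bounded01 (fun _ => c).
Proof. exists (Rabs c); intros; lra. Qed.

Lemma bounded01_id : bounded01 (fun x => x).
Proof. exists 1; intros; rewrite Rabs_pos_eq; lra. Qed.

Lemma bounded01_exp l : bounded01 (fun x => exp (l * x)).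
Proof.
  exists (exp (Rabs l)); intros x Hx.
  rewrite Rabs_pos_eq by (left; apply exp_pos).
  apply exp_le_compat; destruct (Rle_dec 0 l).
  - rewrite Rabs_pos_eq by lra; nra.
  - rewrite Rabs_left by lra; nra.
Qed.

Section Expectation.
Variable d : armdist.

Lemma Ex_zero : Ex d (fun _ => 0) = 0.
Proof.
  pose proof (Ex_lin d 1 _ _ (bounded01_const 0) (bounded01_const 0)) as H; cbv beta in H.
  replace (fun _ : R => 1 * 0 + 0) with (fun _ : R => 0) in H
    by (apply functional_extensionality; intros; ring).
  lra.
Qed.

Lemma Ex_const c : Ex d (fun _ => c) = c.
Proof.
  pose proof (Ex_lin d c _ _ (bounded01_const 1) (bounded01_const 0)) as H; cbv beta in H.
  replace (fun _ : R => c * 1 + 0) with (fun _ : R => c) in H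
    by (apply functional_extensionality; intros; ring).
  rewrite H, Ex_one, Ex_zero; ring.
Qed.

Lemma Ex_scale a f : bounded01 f -> Ex d (fun x => a * f x) = a * Ex d f.
Proof.
  intros Bf.
  pose proof (Ex_lin d a _ _ Bf (bounded01_const 0)) as H; cbv beta in H.
  replace (fun x => a * f x + 0) with (fun x => a * f x) in H
    by (apply functional_extensionality; intros; ring).
  rewrite H, Ex_zero; ring.
Qed.

Lemma Ex_abs_le f M : (forall x, 0 <= x <= 1 -> Rabs (f x) <= M) -> Rabs (Ex d f) <= M.
Proof.
  intros H.
  assert (Bf : bounded01 f) by (exists M; auto).
  assert (0 <= M) by (pose proof (H 0) ; pose proof (Rabs_pos (f 0)); lra).
  pose proof (Ex_mono d f (fun _ => M) Bf (bounded01_const M)) as Hup.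
  pose proof (Ex_mono d (fun _ => - M) f (bounded01_const (- M)) Bf) as Hlo.
  rewrite Ex_const in Hup, Hlo.
  apply Rabs_le; split; [apply Hlo | apply Hup]; intros x Hx;
    pose proof (Rabs_le_inv _ _ (H x Hx)); lra.
Qed.

Lemma Ex_ext01 f g : bounded01 f -> bounded01 g ->
  (forall x, 0 <= x <= 1 -> f x = g x) -> Ex d f = Ex d g.
Proof.
  intros Bf Bg H.
  apply Rle_antisym; apply Ex_mono; auto; intros x Hx; rewrite H; auto; lra.
Qed.

Lemma Ex_nonneg f : bounded01 f -> (forall x, 0 <= x <= 1 -> 0 <= f x) -> 0 <= Ex d f.
Proof.
  intros Bf H; rewrite <- (Ex_const 0).
  apply Ex_mono; auto using bounded01_const.
Qed.

(* Hoeffding's lemma with a non-optimal constant, from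
   [exp y <= 1 + y + 2 y^2] and [x^2 <= 1]. *)
Lemma Ex_exp_le l : Rabs l <= / 2 ->
  Ex d (fun x => exp (l * x)) <= exp (l * mean d + 2 * l ^ 2).
Proof.
  intros Hl; apply Rabs_le_inv in Hl.
  apply Rle_trans with (Ex d (fun x => l * x + (1 + 2 * l ^ 2))).
  - apply Ex_mono.
    + apply bounded01_exp.
    + exists (Rabs l + Rabs (1 + 2 * l ^ 2)); intros x Hx.
      eapply Rle_trans; [apply Rabs_triang|]; rewrite Rabs_mult.
      pose proof (Rabs_pos l); rewrite (Rabs_pos_eq x) by lra; nra.
    + intros x Hx.
      eapply Rle_trans; [apply exp_le_quadratic; nra|].
      assert (x ^ 2 <= 1) by nra.
      replace ((l * x) ^ 2) with (l ^ 2 * x ^ 2) by ring; nra.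
  - rewrite (Ex_lin d l (fun x => x) (fun _ => 1 + 2 * l ^ 2))
      by auto using bounded01_id, bounded01_const.
    rewrite Ex_const.
    pose proof (exp_ineq1_le (l * mean d + 2 * l ^ 2)); unfold mean in *; lra.
Qed.

End Expectation.

(* [Esum d m s h] is the expectation of [h (s + X_1 + ... + X_m)] for
   independent samples [X_i] of [d]. *)
Fixpoint Esum (d : armdist) (m : nat) (s : R) (h : R -> R) : R :=
  match m with
  | O => h s
  | S m' => Ex d (fun x => Esum d m' (s + x) h)
  end.

Definition bounded_on (s : R) (m : nat) (h : R -> R) (M : R) : Prop :=
  forall u, s <= u <= s + INR m -> Rabs (h u) <= M.

Lemma bounded_on_shift s m h M x :
  bounded_on s (S m) h M -> 0 <= x <= 1 -> bounded_on (s + x) m h M.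
Proof. unfold bounded_on; intros H Hx u Hu; apply H; rewrite S_INR; lra. Qed.

Lemma bounded_on_exp l m : bounded_on 0 m (fun u => exp (l * u)) (exp (Rabs l * INR m)).
Proof.
  intros u Hu; rewrite Rabs_pos_eq by (left; apply exp_pos).
  apply exp_le_compat; pose proof (pos_INR m); destruct (Rle_dec 0 l).
  - rewrite Rabs_pos_eq by lra; nra.
  - rewrite Rabs_left by lra; nra.
Qed.

Section IteratedExpectation.
Variable d : armdist.

Lemma Esum_abs_le m : forall s h M, bounded_on s m h M -> Rabs (Esum d m s h) <= M.
Proof.
  induction m as [|m IH]; intros s h M H; simpl.
  - apply H; simpl; lra.
  - apply Ex_abs_le; intros x Hx; apply IH, bounded_on_shift; auto.
Qed.

Lemma bounded01_Esum m s h M :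
  bounded_on s (S m) h M -> bounded01 (fun x => Esum d m (s + x) h).
Proof. intros H; exists M; intros x Hx; apply Esum_abs_le, bounded_on_shift; auto. Qed.

Lemma Esum_mono m : forall s h1 h2 M1 M2, bounded_on s m h1 M1 -> bounded_on s m h2 M2 ->
  (forall u, s <= u <= s + INR m -> h1 u <= h2 u) -> Esum d m s h1 <= Esum d m s h2.
Proof.
  induction m as [|m IH]; intros s h1 h2 M1 M2 B1 B2 H; simpl.
  - apply H; simpl; lra.
  - apply Ex_mono; try (eapply bounded01_Esum; eauto).
    intros x Hx; apply (IH _ _ _ M1 M2); try (apply bounded_on_shift; auto).
    intros u Hu; apply H; rewrite S_INR; lra.
Qed.

Lemma Esum_const m : forall s c, Esum d m s (fun _ => c) = c.
Proof.
  induction m as [|m IH]; intros s c; simpl; auto.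
  replace (fun x => Esum d m (s + x) (fun _ => c)) with (fun _ : R => c)
    by (apply functional_extensionality; intros; rewrite IH; auto).
  apply Ex_const.
Qed.

Lemma Esum_lin m : forall s a h1 h2 M1 M2, bounded_on s m h1 M1 -> bounded_on s m h2 M2 ->
  Esum d m s (fun u => a * h1 u + h2 u) = a * Esum d m s h1 + Esum d m s h2.
Proof.
  induction m as [|m IH]; intros s a h1 h2 M1 M2 B1 B2; simpl; auto.
  assert (Bsum : forall x, 0 <= x <= 1 ->
    bounded_on (s + x) m (fun u => a * h1 u + h2 u) (Rabs a * M1 + M2)).
  { intros x Hx u Hu.
    pose proof (bounded_on_shift _ _ _ _ _ B1 Hx u Hu).
    pose proof (bounded_on_shift _ _ _ _ _ B2 Hx u Hu).
    eapply Rle_trans; [apply Rabs_triang|]; rewrite Rabs_mult.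
    pose proof (Rabs_pos a); apply Rplus_le_compat; auto; apply Rmult_le_compat_l; auto. }
  rewrite <- Ex_lin by (eapply bounded01_Esum; eauto).
  apply Ex_ext01.
  - exists (Rabs a * M1 + M2); intros x Hx; apply Esum_abs_le, Bsum; auto.
  - exists (Rabs a * M1 + M2); intros x Hx.
    eapply Rle_trans; [apply Rabs_triang|]; rewrite Rabs_mult.
    pose proof (Rabs_pos a).
    apply Rplus_le_compat; [apply Rmult_le_compat_l; auto|];
      apply Esum_abs_le, bounded_on_shift; auto.
  - intros x Hx; eapply IH; apply bounded_on_shift; eauto.
Qed.

Lemma Esum_scale m s a h M :
  bounded_on s m h M -> Esum d m s (fun u => a * h u) = a * Esum d m s h.
Proof.
  intros B.
  assert (B0 : bounded_on s m (fun _ => 0) 0) by (intros u _; rewrite Rabs_R0; lra).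
  pose proof (Esum_lin m s a h (fun _ => 0) M 0 B B0) as H.
  rewrite Esum_const in H.
  replace (fun u => a * h u) with (fun u => a * h u + 0)
    by (apply functional_extensionality; intros; ring).
  rewrite H; ring.
Qed.

Lemma Esum_exp l m : forall s,
  Esum d m s (fun u => exp (l * u)) = exp (l * s) * Ex d (fun x => exp (l * x)) ^ m.
Proof.
  induction m as [|m IH]; intros s; simpl; [ring|].
  replace (fun x => Esum d m (s + x) (fun u => exp (l * u)))
    with (fun x => (exp (l * s) * Ex d (fun x => exp (l * x)) ^ m) * exp (l * x)).
  - rewrite Ex_scale by apply bounded01_exp; ring.
  - apply functional_extensionality; intros x.
    rewrite IH, Rmult_plus_distr_l, exp_plus; ring.
Qed.

Lemma Esum_exp_le l m : Rabs l <= / 2 ->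
  Esum d m 0 (fun u => exp (l * u)) <= exp (INR m * (l * mean d + 2 * l ^ 2)).
Proof.
  intros Hl; rewrite Esum_exp, Rmult_0_r, exp_0, Rmult_1_l, exp_mult_INR.
  apply pow_incr; split; [apply Ex_nonneg; [apply bounded01_exp|]; intros; left; apply exp_pos|].
  apply Ex_exp_le; auto.
Qed.

End IteratedExpectation.

Definition indicator (b : bool) : R := if b then 1 else 0.

Definition deviates (m : nat) (t mu u : R) : bool :=
  if Rle_dec t (Rabs (u / INR m - mu)) then true else false.

Lemma bounded_on_indicator s m (f : R -> bool) : bounded_on s m (fun u => indicator (f u)) 1.
Proof. intros u _; unfold indicator; destruct (f u); rewrite ?Rabs_R1, ?Rabs_R0; lra. Qed.

(* Chernoff's trick for both tails at once. *)
Lemma deviates_le_exp m t mu l u : (0 < m)%nat -> 0 < l ->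
  indicator (deviates m t mu u) <=
  exp (- (l * (INR m * (mu + t)))) * exp (l * u) + exp (l * (INR m * (mu - t))) * exp (- l * u).
Proof.
  intros Hm Hl; pose proof (lt_0_INR _ Hm) as HM.
  rewrite <- !exp_plus; unfold indicator, deviates.
  pose proof (exp_pos (- (l * (INR m * (mu + t))) + l * u)).
  pose proof (exp_pos (l * (INR m * (mu - t)) + - l * u)).
  destruct Rle_dec as [Hdev|]; [|lra].
  set (v := u / INR m) in Hdev.
  assert (Hu : u = INR m * v) by (unfold v; field; lra).
  rewrite <- exp_0 at 1; unfold Rabs in Hdev; destruct Rcase_abs in Hdev.
  - assert (E : 0 <= l * (INR m * (mu - t)) + - l * u).
    { replace (l * (INR m * (mu - t)) + - l * u) with (l * INR m * (mu - t - v)) by (rewrite Hu; ring).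
      apply Rmult_le_pos; nra. }
    pose proof (exp_le_compat _ _ E); lra.
  - assert (E : 0 <= - (l * (INR m * (mu + t))) + l * u).
    { replace (- (l * (INR m * (mu + t))) + l * u) with (l * INR m * (v - mu - t)) by (rewrite Hu; ring).
      apply Rmult_le_pos; nra. }
    pose proof (exp_le_compat _ _ E); lra.
Qed.

Lemma Esum_deviates_le d m t : (0 < m)%nat -> 0 < t <= / 2 ->
  Esum d m 0 (fun u => indicator (deviates m t (mean d) u)) <= 2 * exp (- (INR m * t ^ 2 / 8)).
Proof.
  intros Hm Ht.
  set (l := t / 4). set (mu := mean d). set (M := INR m).
  set (A := exp (- (l * (M * (mu + t))))). set (B := exp (l * (M * (mu - t)))).
  assert (Hl : Rabs l <= / 2) by (unfold l; rewrite Rabs_pos_eq; lra).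
  assert (Hl' : Rabs (- l) <= / 2) by (rewrite Rabs_Ropp; auto).
  assert (0 < A) by apply exp_pos. assert (0 < B) by apply exp_pos.
  pose proof (bounded_on_exp l m) as Bl. pose proof (bounded_on_exp (- l) m) as Bl'.
  assert (BB : bounded_on 0 m (fun u => B * exp (- l * u)) (B * exp (Rabs (- l) * M))).
  { intros u Hu; rewrite Rabs_mult, (Rabs_pos_eq B) by lra.
    apply Rmult_le_compat_l; [lra | apply Bl'; auto]. }
  eapply Rle_trans.
  - apply (Esum_mono d m 0 _ (fun u => A * exp (l * u) + B * exp (- l * u)) 1
      (A * exp (Rabs l * M) + B * exp (Rabs (- l) * M)) (bounded_on_indicator _ _ _)).
    + intros u Hu; eapply Rle_trans; [apply Rabs_triang|].
      rewrite Rabs_mult, (Rabs_pos_eq A) by lra.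
      apply Rplus_le_compat; [apply Rmult_le_compat_l; [lra | apply Bl; auto] | apply BB; auto].
    + intros u _; apply deviates_le_exp; auto; unfold l; lra.
  - rewrite (Esum_lin d m 0 A _ _ _ _ Bl BB), (Esum_scale d m 0 B _ _ Bl').
    pose proof (Esum_exp_le d l m Hl) as El. pose proof (Esum_exp_le d (- l) m Hl') as El'.
    fold M mu in El, El'.
    apply Rle_trans with (A * exp (M * (l * mu + 2 * l ^ 2)) + B * exp (M * (- l * mu + 2 * (- l) ^ 2))).
    + apply Rplus_le_compat; apply Rmult_le_compat_l; lra.
    + unfold A, B; rewrite <- !exp_plus.
      replace (- (l * (M * (mu + t))) + M * (l * mu + 2 * l ^ 2)) with (- (M * t ^ 2 / 8))
        by (unfold l; field).
      replace (l * (M * (mu - t)) + M * (- l * mu + 2 * (- l) ^ 2)) with (- (M * t ^ 2 / 8))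
        by (unfold l; field).
      lra.
Qed.

Fixpoint sum_upto (F : nat -> R) (n : nat) : R :=
  match n with
  | O => 0
  | S n' => F O + sum_upto (fun j => F (S j)) n'
  end.

Lemma sum_upto_abs_le n : forall F M, (forall j, Rabs (F j) <= M) ->
  Rabs (sum_upto F n) <= INR n * M.
Proof.
  induction n as [|n IH]; intros F M H; simpl sum_upto.
  - simpl; rewrite Rabs_R0; lra.
  - rewrite S_INR; eapply Rle_trans; [apply Rabs_triang|].
    pose proof (IH (fun j => F (S j)) M (fun j => H (S j))); pose proof (H O); lra.
Qed.

Lemma sum_upto_le n : forall F G, (forall j, (j < n)%nat -> F j <= G j) ->
  sum_upto F n <= sum_upto G n.
Proof.
  induction n as [|n IH]; intros F G H; simpl; [lra|].
  apply Rplus_le_compat; [apply H; lia|]; apply IH; intros j Hj; apply H; lia.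
Qed.

Lemma sum_upto_scale n : forall F c, sum_upto (fun j => c * F j) n = c * sum_upto F n.
Proof. induction n as [|n IH]; intros F c; simpl; [ring|]; rewrite IH; ring. Qed.

Lemma sum_upto_const n c : sum_upto (fun _ => c) n = INR n * c.
Proof. induction n as [|n IH]; simpl sum_upto; [simpl; ring|]; rewrite IH, S_INR; ring. Qed.

Lemma sum_upto_indicator (f : nat -> bool) n : forall k,
  sum_upto (fun j => indicator (f (k + j)%nat)) n = INR (length (filter f (seq k n))).
Proof.
  induction n as [|n IH]; intros k; simpl; auto.
  rewrite Nat.add_0_r.
  replace (fun j => indicator (f (k + S j)%nat)) with (fun j => indicator (f (S k + j)%nat))
    by (apply functional_extensionality; intros j; rewrite Nat.add_succ_r; auto).
  rewrite IH; unfold indicator; destruct (f k); simpl length; rewrite ?S_INR; ring.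
Qed.

Fixpoint pull_sum (i m : nat) (s : R) (k : R -> alg) : alg :=
  match m with
  | O => k s
  | S m' => Pull i (fun x => pull_sum i m' (s + x) k)
  end.

Fixpoint pull_each (m : nat) (l : list nat) (k : list R -> alg) : alg :=
  match l with
  | nil => k nil
  | i :: l' => pull_sum i m 0 (fun s => pull_each m l' (fun es => k (s :: es)))
  end.

Fixpoint Eeach (D : nat -> armdist) (m : nat) (l : list nat) (g : list R -> R) : R :=
  match l with
  | nil => g nil
  | i :: l' => Esum (D i) m 0 (fun s => Eeach D m l' (fun es => g (s :: es)))
  end.

Lemma succ_prob_pull_sum D P i m : forall s k,
  succ_prob D P (pull_sum i m s k) = Esum (D i) m s (fun u => succ_prob D P (k u)).
Proof.
  induction m as [|m IH]; intros s k; simpl; auto.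
  f_equal; apply functional_extensionality; intros x; apply IH.
Qed.

Lemma succ_prob_pull_each D P m l : forall k,
  succ_prob D P (pull_each m l k) = Eeach D m l (fun es => succ_prob D P (k es)).
Proof.
  induction l as [|i l IH]; intros k; simpl; auto.
  rewrite succ_prob_pull_sum; f_equal.
  apply functional_extensionality; intros s; apply IH.
Qed.

Lemma pulls_within_pull_sum n i m : forall s k B, (i < n)%nat -> INR m <= B ->
  (forall u, pulls_within n (k u) (B - INR m)) -> pulls_within n (pull_sum i m s k) B.
Proof.
  induction m as [|m IH]; intros s k B Hi HB Hk; simpl.
  - replace B with (B - 0) by ring; auto.
  - rewrite S_INR in HB; pose proof (pos_INR m).
    split; auto; split; [lra|]; intros x; apply IH; auto; [lra|].
    intros u; replace (B - 1 - INR m) with (B - INR (S m)) by (rewrite S_INR; ring); auto.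
Qed.

Lemma pulls_within_pull_each n m l : forall (f : list R -> list nat) B,
  (forall i, In i l -> (i < n)%nat) -> INR m * INR (length l) <= B ->
  pulls_within n (pull_each m l (fun es => Out (f es))) B.
Proof.
  induction l as [|i l IH]; intros f B Hl HB; simpl; auto.
  simpl length in HB; rewrite S_INR in HB.
  pose proof (pos_INR m); pose proof (pos_INR (length l)).
  apply pulls_within_pull_sum; [apply Hl; simpl; auto | nra |].
  intros u; apply (IH (fun es => f (u :: es))); [intros j Hj; apply Hl; simpl; auto | lra].
Qed.

Lemma Eeach_abs_le D m l : forall g M, (forall es, Rabs (g es) <= M) ->
  Rabs (Eeach D m l g) <= M.
Proof.
  induction l as [|i l IH]; intros g M H; simpl; auto.
  apply Esum_abs_le; intros u _; apply IH; auto.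
Qed.

Lemma Eeach_mono D m l : forall g1 g2 M1 M2,
  (forall es, Rabs (g1 es) <= M1) -> (forall es, Rabs (g2 es) <= M2) ->
  (forall es, g1 es <= g2 es) -> Eeach D m l g1 <= Eeach D m l g2.
Proof.
  induction l as [|i l IH]; intros g1 g2 M1 M2 B1 B2 H; simpl; auto.
  apply (Esum_mono _ _ _ _ _ M1 M2); intros u _.
  - apply Eeach_abs_le; auto.
  - apply Eeach_abs_le; auto.
  - apply (IH _ _ M1 M2); auto.
Qed.

(* Linearity: the [j]-th reward sum has the law of [m] pulls of arm [nth j l]. *)
Lemma Eeach_sum D m l : forall a0 F M, (forall j u, Rabs (F j u) <= M) ->
  Eeach D m l (fun es => a0 + sum_upto (fun j => F j (nth j es 0)) (length l)) =
  a0 + sum_upto (fun j => Esum (D (nth j l O)) m 0 (F j)) (length l).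
Proof.
  induction l as [|i l IH]; intros a0 F M HF; simpl; auto.
  set (rest := sum_upto (fun j => Esum (D (nth j l O)) m 0 (F (S j))) (length l)).
  replace (fun s => Eeach D m l (fun es => a0 + (F O s + sum_upto (fun j => F (S j) (nth j es 0)) (length l))))
    with (fun s => 1 * F O s + (a0 + rest)).
  - rewrite (Esum_lin _ _ _ 1 _ _ M (Rabs (a0 + rest))) by (intros u _; auto; lra).
    rewrite Esum_const; ring.
  - apply functional_extensionality; intros s.
    transitivity (a0 + F O s + rest); [ring|]; unfold rest.
    rewrite <- (IH (a0 + F O s) (fun j => F (S j)) M) by auto.
    f_equal; apply functional_extensionality; intros es; ring.
Qed.

(* The union bound, phrased via a pointwise lower bound on the success
   indicator. *)
Lemma succ_prob_ge_union_bound D P m n (f : list R -> list nat) (bad : nat -> R -> bool) c :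
  0 <= c ->
  (forall es, 1 - c * sum_upto (fun j => indicator (bad j (nth j es 0))) n <=
              indicator (if excluded_middle_informative (P (f es)) then true else false)) ->
  1 - c * sum_upto (fun j => Esum (D j) m 0 (fun u => indicator (bad j u))) n <=
  succ_prob D P (pull_each m (seq 0 n) (fun es => Out (f es))).
Proof.
  intros Hc Hbound.
  set (F := fun j u => - c * indicator (bad j u)).
  assert (HF : forall j u, Rabs (F j u) <= c).
  { intros j u; unfold F, indicator; destruct (bad j u);
      [rewrite Rmult_1_r, Rabs_Ropp, Rabs_pos_eq | rewrite Rmult_0_r, Rabs_R0]; lra. }
  assert (Hsum : sum_upto (fun j => Esum (D (nth j (seq 0 n) O)) m 0 (F j)) n =
                 - c * sum_upto (fun j => Esum (D j) m 0 (fun u => indicator (bad j u))) n).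
  { rewrite <- sum_upto_scale; apply Rle_antisym; apply sum_upto_le; intros j Hj;
      rewrite seq_nth, Nat.add_0_l by auto; unfold F;
      rewrite (Esum_scale _ _ _ _ _ 1) by apply bounded_on_indicator; lra. }
  rewrite succ_prob_pull_each.
  apply Rle_trans with
    (Eeach D m (seq 0 n) (fun es => 1 + sum_upto (fun j => F j (nth j es 0)) (length (seq 0 n)))).
  - rewrite (Eeach_sum D m (seq 0 n) 1 F c HF), length_seq, Hsum; lra.
  - apply (Eeach_mono _ _ _ _ _ (1 + INR (length (seq 0 n)) * c) 1).
    + intros es; eapply Rle_trans; [apply Rabs_triang|]; rewrite Rabs_R1.
      pose proof (sum_upto_abs_le (length (seq 0 n)) (fun j => F j (nth j es 0)) c (fun j => HF j _)).
      lra.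
    + intros es; cbn [succ_prob]; destruct excluded_middle_informative;
        rewrite ?Rabs_R1, ?Rabs_R0; lra.
    + intros es; cbn [succ_prob]; rewrite length_seq.
      specialize (Hbound es); unfold F; rewrite sum_upto_scale.
      destruct excluded_middle_informative; simpl in Hbound; lra.
Qed.

Lemma NoDup_remove_nat a l : NoDup l -> NoDup (remove Nat.eq_dec a l).
Proof. rewrite <- remove_alt; apply NoDup_filter. Qed.

Lemma length_remove_NoDup a l : NoDup l -> In a l ->
  length (remove Nat.eq_dec a l) = (length l - 1)%nat.
Proof.
  induction l as [|x l IH]; intros Hl Ha; [destruct Ha|].
  inversion Hl as [|? ? Hx Hl']; subst; simpl.
  destruct (Nat.eq_dec a x) as [->|Hax].
  - rewrite notin_remove by auto; lia.
  - destruct Ha as [->|Ha]; [congruence|].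
    simpl; rewrite IH by auto; destruct l; [destruct Ha | simpl; lia].
Qed.

Fixpoint argmax (sc : nat -> R) (x : nat) (l : list nat) : nat :=
  match l with
  | nil => x
  | y :: l' => if Rlt_dec (sc x) (sc y) then argmax sc y l' else argmax sc x l'
  end.

Lemma argmax_in sc l : forall x, In (argmax sc x l) (x :: l).
Proof.
  induction l as [|y l IH]; intros x; simpl; auto.
  destruct Rlt_dec; [specialize (IH y) | specialize (IH x)]; simpl in IH; tauto.
Qed.

Lemma argmax_max sc l : forall x z, In z (x :: l) -> sc z <= sc (argmax sc x l).
Proof.
  induction l as [|y l IH]; intros x z Hz; simpl.
  - destruct Hz as [<-|[]]; lra.
  - destruct Rlt_dec.
    + destruct Hz as [<-|Hz]; [pose proof (IH y y (or_introl eq_refl)); lra | auto].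
    + destruct Hz as [<-|[<-|Hz]]; [apply IH; simpl; auto | | apply IH; simpl; auto].
      pose proof (IH x x (or_introl eq_refl)); lra.
Qed.

Fixpoint select_top (sc : nat -> R) (k : nat) (rem : list nat) : list nat :=
  match k, rem with
  | S k', x :: l =>
      argmax sc x l :: select_top sc k' (remove Nat.eq_dec (argmax sc x l) (x :: l))
  | _, _ => nil
  end.

Lemma select_top_incl sc k : forall rem, incl (select_top sc k rem) rem.
Proof.
  induction k as [|k IH]; intros [|x l] a Ha; cbn [select_top] in Ha; try tauto.
  destruct Ha as [<-|Ha]; [apply argmax_in|].
  apply IH, in_remove in Ha; tauto.
Qed.

Lemma select_top_NoDup sc k : forall rem, NoDup rem -> NoDup (select_top sc k rem).
Proof.
  induction k as [|k IH]; intros [|x l] H; cbn [select_top]; try constructor.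
  - intros Hin; apply select_top_incl, remove_In in Hin; auto.
  - apply IH, NoDup_remove_nat; auto.
Qed.

Lemma select_top_length sc k : forall rem, NoDup rem -> (k <= length rem)%nat ->
  length (select_top sc k rem) = k.
Proof.
  induction k as [|k IH]; intros [|x l] H Hk; cbn [select_top length] in *; auto; [lia|].
  f_equal; apply IH; [apply NoDup_remove_nat; auto|].
  rewrite length_remove_NoDup; auto; [simpl; lia | apply argmax_in].
Qed.

Lemma select_top_upward_closed sc k : forall rem a b,
  In a (select_top sc k rem) -> In b rem -> sc a < sc b -> In b (select_top sc k rem).
Proof.
  induction k as [|k IH]; intros [|x l] a b Ha Hb Hab; cbn [select_top] in *; try tauto.
  destruct (Nat.eq_dec (argmax sc x l) b) as [E|E]; [left; auto | right].
  destruct Ha as [<-|Ha].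
  - pose proof (argmax_max sc l x b Hb); lra.
  - apply (IH _ a); auto; apply in_in_remove; auto.
Qed.

Lemma sum_lt_of_mean_separated m t mu_a mu_b u_a u_b : (0 < m)%nat ->
  Rabs (u_a / INR m - mu_a) < t -> Rabs (u_b / INR m - mu_b) < t -> mu_a + 2 * t <= mu_b ->
  u_a < u_b.
Proof.
  intros Hm Ha Hb Hab; pose proof (lt_0_INR _ Hm) as HM.
  apply Rabs_def2 in Ha, Hb.
  apply Rmult_lt_reg_r with (/ INR m); [apply Rinv_0_lt_compat; auto|].
  unfold Rdiv in *; lra.
Qed.

Lemma length_filter_negb_ge (f : nat -> bool) l U : NoDup l -> incl l U ->
  (length l <= length (filter (fun b => negb (f b)) l) + length (filter f U))%nat.
Proof.
  intros Hl HlU.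
  pose proof (filter_length f l) as Hsplit.
  assert (length (filter f l) <= length (filter f U))%nat.
  { apply NoDup_incl_length; [apply NoDup_filter; auto|].
    intros b Hb; apply filter_In in Hb as [Hb Hfb]; apply filter_In; auto. }
  lia.
Qed.

Lemma sorted_ranking_NoDup_map n D sigma h : sorted_ranking n D sigma -> (h <= n)%nat ->
  NoDup (map sigma (seq 0 h)).
Proof.
  intros [_ [Hinj _]] Hh.
  apply NoDup_map_NoDup_ForallPairs; [|apply seq_NoDup].
  intros x y Hx Hy E; apply in_seq in Hx, Hy; apply Hinj; auto; lia.
Qed.

Definition arm_deviates (D : nat -> armdist) (m : nat) (t : R) (es : list R) (a : nat) : bool :=
  deviates m t (mean (D a)) (nth a es 0).

Section Selection.
Variables (n K m : nat) (phi : R) (D : nat -> armdist) (sigma : nat -> nat) (es : list R).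
Hypothesis HnK : (n <= 3 * K)%nat.
Hypothesis Hm : (0 < m)%nat.
Hypothesis Hsigma : sorted_ranking n D sigma.
Hypothesis Hgap : mean (D (sigma (K / 2 - 1)%nat)) - mean (D (sigma (K - 1)%nat)) >= phi.

Let dev := arm_deviates D m (phi / 2) es.

(* A non-deviating bad arm in an upward-closed set [T] drags every
   non-deviating arm of the top [K/2] into [T]. *)
Lemma bad_selected_arm_deviates (T : list nat) a j :
  NoDup T -> length T = (n / 10)%nat ->
  (forall a b, In a T -> In b (seq 0 n) -> nth a es 0 < nth b es 0 -> In b T) ->
  (10 * length (filter dev (seq 0 n)) < K)%nat ->
  In a T -> (K <= j < n)%nat -> sigma j = a -> dev a = true.
Proof.
  intros HT Hlen Hup Hfew Ha Hj Hsj.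
  destruct (dev a) eqn:Ea; auto; exfalso.
  set (h := (K / 2)%nat).
  assert (Hh : (2 * h <= K <= 2 * h + 1)%nat).
  { pose proof (Nat.div_mod_eq K 2); pose proof (Nat.mod_upper_bound K 2); unfold h; lia. }
  assert (Hmap : NoDup (map sigma (seq 0 h))) by (apply (sorted_ranking_NoDup_map n D); auto; lia).
  destruct Hsigma as [Hrange [Hinj Hsorted]].
  set (G := filter (fun b => negb (dev b)) (map sigma (seq 0 h))).
  assert (HG : incl (a :: G) T).
  { intros b [<-|Hb]; auto.
    apply filter_In in Hb as [Hb Hndb]; apply in_map_iff in Hb as [i [<- Hi]].
    apply in_seq in Hi.
    apply (Hup a); auto; [apply in_seq; split; [lia | apply Hrange; lia]|].
    unfold dev, arm_deviates, deviates in Ea, Hndb.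
    destruct Rle_dec as [|Na] in Ea; [discriminate|].
    destruct Rle_dec as [|Nb] in Hndb; [discriminate|].
    apply (sum_lt_of_mean_separated m (phi / 2) (mean (D a)) (mean (D (sigma i))));
      [exact Hm | lra | lra |].
    assert (mean (D (sigma (h - 1)%nat)) <= mean (D (sigma i))) by (apply Hsorted; lia).
    assert (mean (D a) <= mean (D (sigma (K - 1)%nat))) by (rewrite <- Hsj; apply Hsorted; lia).
    fold h in Hgap; lra. }
  assert (HaG : ~ In a G).
  { intros Hin; apply filter_In in Hin as [Hin _]; apply in_map_iff in Hin as [i [Ei Hi]].
    apply in_seq in Hi; rewrite <- Hsj in Ei; apply Hinj in Ei; lia. }
  pose proof (NoDup_incl_length (NoDup_cons _ HaG (NoDup_filter _ Hmap)) HG) as HGT.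
  assert (Hcount : (h <= length G + length (filter dev (seq 0 n)))%nat).
  { rewrite <- (length_seq h 0) at 1; rewrite <- (length_map sigma).
    apply length_filter_negb_ge; auto.
    intros b Hb; apply in_map_iff in Hb as [i [<- Hi]]; apply in_seq in Hi.
    apply in_seq; split; [lia | apply Hrange; lia]. }
  pose proof (Nat.Div0.mul_div_le n 10).
  simpl length in HGT; lia.
Qed.

Lemma few_deviations_good_output gamma : gamma <= / 2 ->
  INR (length (filter dev (seq 0 n))) < gamma * INR K / 5 ->
  good_output n K gamma sigma (select_top (fun a => nth a es 0) (n / 10) (seq 0 n)).
Proof.
  intros Hg Hfew.
  set (T := select_top (fun a => nth a es 0) (n / 10) (seq 0 n)).
  set (cd := length (filter dev (seq 0 n))) in Hfew.
  assert (HT : NoDup T) by apply select_top_NoDup, seq_NoDup.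
  assert (HTn : incl T (seq 0 n)) by apply select_top_incl.
  assert (Hlen : length T = (n / 10)%nat).
  { apply select_top_length; [apply seq_NoDup|].
    rewrite length_seq; apply Nat.Div0.div_le_upper_bound; lia. }
  assert (Hcd : (10 * cd < K)%nat).
  { apply INR_lt; rewrite mult_INR; simpl (INR 10); pose proof (pos_INR K); nra. }
  assert (Hbad : (bad_count n K sigma T <= cd)%nat).
  { apply NoDup_incl_length; [apply NoDup_filter; auto|].
    intros a Ha; apply filter_In in Ha as [Ha Hb].
    apply existsb_exists in Hb as [j [Hj E]]; apply Nat.eqb_eq in E; apply in_seq in Hj.
    apply filter_In; split; auto.
    apply (bad_selected_arm_deviates T a j); auto; try lia.
    intros b c Hb Hc Hbc; apply (select_top_upward_closed (fun a => nth a es 0) _ _ b); auto. }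
  repeat split; auto.
  - intros a Ha; apply HTn, in_seq in Ha; lia.
  - apply le_INR in Hbad; pose proof (pos_INR K); pose proof (pos_INR cd); nra.
Qed.

End Selection.

Lemma ln_inv_ge_ln2 g : 0 < g <= / 2 -> ln 2 <= ln (/ g).
Proof.
  intros Hg; apply ln_le_compat; [lra|].
  rewrite <- (Rinv_inv 2); apply Rinv_le_contravar; lra.
Qed.

Lemma failure_budget_le n K gamma delta x : (n <= 3 * K)%nat -> (0 < K)%nat ->
  0 < gamma <= / 2 -> 0 < delta <= / 2 ->
  4 * (ln (/ gamma) + ln (/ delta)) <= x ->
  5 / (gamma * INR K) * (INR n * (2 * exp (- x))) <= delta.
Proof.
  intros HnK HK Hg Hd Hx.
  assert (HK0 : 0 < INR K) by (apply lt_0_INR; auto).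
  assert (Hn : INR n <= 3 * INR K) by (replace 3 with (INR 3) by (simpl; ring);
    rewrite <- mult_INR; apply le_INR; auto).
  assert (Hexp : exp (- x) <= gamma ^ 4 * delta ^ 4).
  { replace (gamma ^ 4 * delta ^ 4) with (exp (INR 4 * - (ln (/ gamma) + ln (/ delta)))).
    - apply exp_le_compat; simpl INR; lra.
    - rewrite exp_mult_INR, !ln_Rinv, Ropp_plus_distr, !Ropp_involutive, exp_plus, !exp_ln
        by lra; ring. }
  assert (Hgd : gamma ^ 3 * delta ^ 3 <= / 64).
  { replace (gamma ^ 3 * delta ^ 3) with ((gamma * delta) ^ 3) by ring.
    replace (/ 64) with ((/ 4) ^ 3) by field; apply pow_incr; split; nra. }
  assert (0 < gamma ^ 3 * delta ^ 3) by (apply Rmult_lt_0_compat; apply pow_lt; lra).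
  apply Rle_trans with (5 / (gamma * INR K) * (3 * INR K * (2 * (gamma ^ 4 * delta ^ 4)))).
  - apply Rmult_le_compat_l; [left; apply Rdiv_lt_0_compat; nra|].
    pose proof (pos_INR n); pose proof (exp_pos (- x)); nra.
  - replace (5 / (gamma * INR K) * (3 * INR K * (2 * (gamma ^ 4 * delta ^ 4))))
      with (30 * (gamma ^ 3 * delta ^ 3) * delta) by (field; lra).
    nra.
Qed.

Definition sample_size (gamma delta phi : R) : nat :=
  Z.to_nat (up (128 * (ln (/ gamma) + ln (/ delta)) / phi ^ 2)).

Lemma sample_size_bounds gamma delta phi :
  0 < gamma <= / 2 -> 0 < delta <= / 2 -> 0 < phi <= 1 ->
  let L := ln (/ gamma) + ln (/ delta) in
  128 * L <= INR (sample_size gamma delta phi) * phi ^ 2 /\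
  INR (sample_size gamma delta phi) <= 129 * L / phi ^ 2.
Proof.
  intros Hg Hd Hphi L.
  pose proof (ln_inv_ge_ln2 _ Hg); pose proof (ln_inv_ge_ln2 _ Hd); pose proof ln_lt_2.
  assert (HL : 1 < L) by (unfold L; lra).
  assert (Hp2 : 0 < phi ^ 2 <= 1) by (split; nra).
  set (x := 128 * L / phi ^ 2).
  assert (HLx : L <= L / phi ^ 2).
  { unfold Rdiv; rewrite <- (Rmult_1_r L) at 1; apply Rmult_le_compat_l; [lra|].
    rewrite <- Rinv_1; apply Rinv_le_contravar; lra. }
  destruct (archimed x) as [Hup1 Hup2].
  assert (Hm : INR (sample_size gamma delta phi) = IZR (up x)).
  { unfold sample_size; fold L x.
    rewrite INR_IZR_INZ, Z2Nat.id; auto; apply le_IZR; unfold x in *.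
    assert (0 < 128 * L / phi ^ 2) by (apply Rdiv_lt_0_compat; lra); lra. }
  rewrite Hm; split.
  - apply Rle_trans with (x * phi ^ 2); [unfold x; right; field; lra | nra].
  - replace (129 * L / phi ^ 2) with (x + L / phi ^ 2) by (unfold x; field; lra); lra.
Qed.

Definition top_tenth_alg (n : nat) (gamma delta phi : R) : alg :=
  pull_each (sample_size gamma delta phi) (seq 0 n)
    (fun es => Out (select_top (fun a => nth a es 0) (n / 10) (seq 0 n))).

Lemma top_tenth_alg_pulls n gamma delta phi :
  0 < gamma <= / 2 -> 0 < delta <= / 2 -> 0 < phi <= 1 ->
  pulls_within n (top_tenth_alg n gamma delta phi)
    (129 * INR n / phi ^ 2 * (ln (/ gamma) + ln (/ delta))).
Proof.
  intros Hg Hd Hphi.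
  destruct (sample_size_bounds _ _ _ Hg Hd Hphi) as [_ Hm].
  apply pulls_within_pull_each; [intros i Hi; apply in_seq in Hi; lia|].
  rewrite length_seq; pose proof (pos_INR n).
  replace (129 * INR n / phi ^ 2 * (ln (/ gamma) + ln (/ delta)))
    with ((129 * (ln (/ gamma) + ln (/ delta)) / phi ^ 2) * INR n) by (field; nra).
  apply Rmult_le_compat_r; auto.
Qed.

(* Markov's inequality in pointwise form: more than [gamma K / 5] deviating
   arms already cost the whole bound. *)
Lemma good_output_indicator_ge n K m gamma phi D sigma es :
  (n <= 3 * K)%nat -> (0 < K)%nat -> (0 < m)%nat -> 0 < gamma <= / 2 ->
  sorted_ranking n D sigma ->
  mean (D (sigma (K / 2 - 1)%nat)) - mean (D (sigma (K - 1)%nat)) >= phi ->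
  1 - 5 / (gamma * INR K) * INR (length (filter (arm_deviates D m (phi / 2) es) (seq 0 n))) <=
  indicator (if excluded_middle_informative
                (good_output n K gamma sigma (select_top (fun a => nth a es 0) (n / 10) (seq 0 n)))
             then true else false).
Proof.
  intros HnK HK Hm Hg Hsigma Hgap.
  set (cd := INR (length (filter (arm_deviates D m (phi / 2) es) (seq 0 n)))).
  assert (HK0 : 0 < INR K) by (apply lt_0_INR; auto).
  assert (0 <= cd) by apply pos_INR.
  destruct (Rlt_dec cd (gamma * INR K / 5)) as [Hfew|Hmany].
  - destruct excluded_middle_informative as [_|Nok].
    + assert (0 <= 5 / (gamma * INR K) * cd) by (apply Rmult_le_pos; auto; left;
        apply Rdiv_lt_0_compat; nra).
      simpl; lra.
    + exfalso; apply Nok, (few_deviations_good_output n K m phi D sigma); auto; lra.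
  - assert (1 <= 5 / (gamma * INR K) * cd).
    { replace 1 with (5 / (gamma * INR K) * (gamma * INR K / 5)) by (field; nra).
      apply Rmult_le_compat_l; [left; apply Rdiv_lt_0_compat; nra | lra]. }
    destruct excluded_middle_informative; simpl; lra.
Qed.

Lemma top_tenth_alg_success n K gamma delta phi D sigma :
  (n <= 3 * K)%nat -> (K < n)%nat ->
  0 < gamma <= / 2 -> 0 < delta <= / 2 -> 0 < phi <= 1 ->
  sorted_ranking n D sigma ->
  mean (D (sigma (K / 2 - 1)%nat)) - mean (D (sigma (K - 1)%nat)) >= phi ->
  1 - delta <= succ_prob D (good_output n K gamma sigma) (top_tenth_alg n gamma delta phi).
Proof.
  intros HnK HKn Hg Hd Hphi Hsigma Hgap.
  set (m := sample_size gamma delta phi).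
  destruct (sample_size_bounds _ _ _ Hg Hd Hphi) as [Hm _]; fold m in Hm.
  pose proof (ln_inv_ge_ln2 _ Hg); pose proof (ln_inv_ge_ln2 _ Hd); pose proof ln_lt_2.
  assert (HK : (0 < K)%nat) by lia.
  assert (HK0 : 0 < INR K) by (apply lt_0_INR; auto).
  assert (Hm0 : (0 < m)%nat) by (apply INR_lt; simpl; nra).
  set (c := 5 / (gamma * INR K)).
  assert (Hc : 0 < c) by (apply Rdiv_lt_0_compat; nra).
  set (x := INR m * (phi / 2) ^ 2 / 8).
  assert (Htail : sum_upto (fun j => Esum (D j) m 0
                    (fun u => indicator (deviates m (phi / 2) (mean (D j)) u))) n
                  <= INR n * (2 * exp (- x))).
  { rewrite <- sum_upto_const; apply sum_upto_le; intros j _.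
    apply Esum_deviates_le; auto; lra. }
  assert (c * (INR n * (2 * exp (- x))) <= delta) by (apply failure_budget_le; auto; unfold x; lra).
  eapply Rle_trans;
    [| apply (succ_prob_ge_union_bound D _ m n _ (fun j => deviates m (phi / 2) (mean (D j))) c)].
  - assert (c * sum_upto (fun j => Esum (D j) m 0
                (fun u => indicator (deviates m (phi / 2) (mean (D j)) u))) n
            <= c * (INR n * (2 * exp (- x)))) by (apply Rmult_le_compat_l; lra).
    lra.
  - lra.
  - intros es.
    replace (sum_upto _ n)
      with (INR (length (filter (arm_deviates D m (phi / 2) es) (seq 0 n))))
      by (symmetry; exact (sum_upto_indicator (arm_deviates D m (phi / 2) es) n 0)).
    apply good_output_indicator_ge; auto.
Qed.

Theorem mainTheorem8 :
  exists C : R, 0 < C /\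
  exists A : nat -> nat -> R -> R -> R -> alg,
  forall (n K : nat) (gamma delta phi : R) (D : nat -> armdist) (sigma : nat -> nat),
    (n mod 10 = 0)%nat -> Nat.even K = true ->
    (n <= 3 * K)%nat -> (K <= n - 1)%nat -> (K < n)%nat ->
    0 < gamma <= / 2 -> 0 < delta <= / 2 -> 0 < phi <= 1 ->
    sorted_ranking n D sigma ->
    mean (D (sigma (K / 2 - 1)%nat)) - mean (D (sigma (K - 1)%nat)) >= phi ->
    pulls_within n (A n K gamma delta phi)
      (C * INR n / phi ^ 2 * (ln (/ gamma) + ln (/ delta))) /\
    succ_prob D (good_output n K gamma sigma) (A n K gamma delta phi) >= 1 - delta.
Proof.
  exists 129; split; [lra|].
  exists (fun n _ => top_tenth_alg n).
  intros n K gamma delta phi D sigma _ _ HnK _ HKn Hg Hd Hphi Hsigma Hgap; split.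
  - apply top_tenth_alg_pulls; auto.
  - apply Rle_ge, top_tenth_alg_success; auto.
Qed.
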